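(* For all integers $k\geq 2$ and $i\geq 2k+3$, and all integers $j\geq k+2$, $$R_k^{\mathcal{BIP}}(i,j)=\begin{cases}2j-1-k, & \text{if } k+2\leq j\leq 2k,\\ 2j-1, & \text{if } j\geq 2k+1,\end{cases}$$ where $\mathcal{BIP}$ is the class of bipartite graphs.
   Context: All graphs are finite and simple. For a graph $G$ and a nonnegative integer $k$, a $k$-sparse $j$-set is a set of $j$ vertices of $G$ inducing a subgraph of maximum degree at most $k$; a $k$-dense $i$-set is a set of $i$ vertices of $G$ that is $k$-sparse in the complement of $G$. For a graph class $\mathcal{G}$, $R_k^{\mathcal{G}}(i,j)$ is the smallest natural number $n$ such that every graph on $n$ vertices in $\mathcal{G}$ has either a $k$-dense $i$-set or a $k$-sparse $j$-set. *)

From mathcomp Require Import all_boot.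
Set Implicit Arguments. Unset Strict Implicit. Unset Printing Implicit Defensive.

Definition simple_graph (T : finType) (e : rel T) : Prop :=
  (forall x, ~~ e x x) /\ (forall x y, e x y = e y x).

Definition bipartite (T : finType) (e : rel T) : Prop :=
  exists c : T -> bool, forall x y, e x y -> c x != c y.

Definition compl_graph (T : finType) (e : rel T) : rel T :=
  fun x y => (x != y) && ~~ e x y.

Definition max_deg_le (T : finType) (e : rel T) (k : nat) (S : {set T}) : bool :=
  [forall x in S, #|[set y in S | e x y]| <= k].

Definition k_sparse_set (T : finType) (e : rel T) (k j : nat) (S : {set T}) : bool :=
  (#|S| == j) && max_deg_le e k S.

Definition k_dense_set (T : finType) (e : rel T) (k i : nat) (S : {set T}) : bool :=
  k_sparse_set (compl_graph e) k i S.

Definition ramsey_prop_BIP (k i j n : nat) : Prop :=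
  forall e : rel 'I_n, simple_graph e -> bipartite e ->
    (exists S : {set 'I_n}, k_dense_set e k i S) \/
    (exists S : {set 'I_n}, k_sparse_set e k j S).

Definition is_R_BIP (k i j r : nat) : Prop :=
  ramsey_prop_BIP k i j r /\ (forall n, ramsey_prop_BIP k i j n -> r <= n).

From mathcomp Require Import all_boot zify.
Set Implicit Arguments. Unset Strict Implicit. Unset Printing Implicit Defensive.

(* In a bipartite graph each colour class is independent, so a k-dense set
   meets each class in at most k + 1 vertices and has fewer than i vertices:
   only k-sparse j-sets matter.  Taking a vertices of one colour and b of the
   other gives a k-sparse set as soon as a > 0 forces b <= k and b > 0 forces
   a <= k, and in a complete bipartite graph this condition is also necessary.
   Hence every splitting n = p + q of the two colour classes must admit such
   a + b = j with a <= p and b <= q, and the complete bipartite graph with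
   sides min(j - 1, n) and n - min(j - 1, n) shows that smaller n fail. *)

Lemma exists_subset_card (T : finType) (A : {set T}) m :
  m <= #|A| -> exists2 B : {set T}, B \subset A & #|B| = m.
Proof.
rewrite -bin_gt0 -cards_draws => /card_gt0P [B].
by rewrite inE => /andP [BA /eqP cardB]; exists B.
Qed.

Definition bip_sparse (k a b : nat) : Prop := (0 < a -> b <= k) /\ (0 < b -> a <= k).

Section Colouring.

Variables (T : finType) (c : T -> bool).

Definition side (S : {set T}) (b : bool) : {set T} := [set x in S | c x == b].

Lemma card_sides S : #|side S true| + #|side S false| = #|S|.
Proof.
rewrite -(cardsID [set x | c x] S); congr (_ + _); apply: eq_card => x.
  by rewrite !inE eqb_id andbC.
by rewrite !inE eqbF_neg andbC.
Qed.

Lemma side_colour (A S : {set T}) b : S \subset side A b -> {in S, forall x, c x = b}.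
Proof. by move=> /subsetP SA x /SA; rewrite inE => /andP [_ /eqP]. Qed.

Lemma large_side (S : {set T}) : exists b, #|S| <= 2 * #|side S b|.
Proof.
have := card_sides S; case: (leqP #|side S false| #|side S true|) => ?.
  by exists true; lia.
by exists false; lia.
Qed.

Lemma bip_sparse_sides k (S : {set T}) :
  bip_sparse k #|side S true| #|side S false| <->
  {in S, forall x, #|side S (~~ c x)| <= k}.
Proof.
split.
  by move=> [sp_true sp_false] x xS; case cx: (c x) => /=;
    [apply: sp_true | apply: sp_false]; apply/card_gt0P; exists x;
    rewrite inE xS cx.
by move=> cross; split=> /card_gt0P [x]; rewrite inE => /andP [xS /eqP cx];
  have := cross x xS; rewrite cx.
Qed.

Section Bipartite.

Variable e : rel T.
Hypothesis e_bichromatic : forall x y, e x y -> c x != c y.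

Lemma max_deg_le_cross k (S : {set T}) :
  {in S, forall x, #|side S (~~ c x)| <= k} -> max_deg_le e k S.
Proof.
move=> cross; apply/forallP => x; apply/implyP => xS.
apply: leq_trans (cross x xS); apply: subset_leq_card; apply/subsetP => y.
rewrite !inE => /andP [-> /e_bichromatic]; by case: (c x); case: (c y).
Qed.

(* Each colour class is independent, hence a clique of the complement. *)
Lemma not_max_deg_le_compl k (S : {set T}) :
  2 * k + 3 <= #|S| -> ~~ max_deg_le (compl_graph e) k S.
Proof.
move=> large_S; apply/forallP => /= dense.
have [b /(leq_trans large_S) large_b] := large_side S.
have /card_gt0P [x xb] : 0 < #|side S b| by lia.
have xS : x \in S by move: xb; rewrite inE => /andP [].
have /implyP /(_ xS) := dense x.
suff /subset_leq_card : side S b :\ x \subset [set y in S | compl_graph e x y].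
  by move: (cardsD1 x (side S b)); rewrite xb; lia.
apply/subsetP => y; rewrite !inE => /andP [yx /andP [yS /eqP cy]].
move: xb; rewrite inE => /andP [_ /eqP cx].
rewrite yS /compl_graph eq_sym yx /=; apply/negP => /e_bichromatic.
by rewrite cx cy eqxx.
Qed.

End Bipartite.

Definition complete_bipartite : rel T := fun x y => c x != c y.

Lemma complete_bipartite_simple : simple_graph complete_bipartite.
Proof. by split=> [x | x y]; rewrite /complete_bipartite ?eqxx // eq_sym. Qed.

Lemma complete_bipartite_bipartite : bipartite complete_bipartite.
Proof. by exists c. Qed.

Lemma max_deg_le_complete_cross k (S : {set T}) :
  max_deg_le complete_bipartite k S -> {in S, forall x, #|side S (~~ c x)| <= k}.
Proof.
move=> /forallP sparse x xS; move/implyP: (sparse x) => /(_ xS).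
congr (_ <= _); apply: eq_card => y; rewrite !inE /complete_bipartite.
by case: (c x); case: (c y).
Qed.

End Colouring.

Lemma ramsey_prop_BIP_of_splits k i j n :
  2 * k + 3 <= i ->
  (forall p q, p + q = n ->
     exists a b, [/\ a <= p, b <= q, a + b = j & bip_sparse k a b]) ->
  ramsey_prop_BIP k i j n.
Proof.
move=> large_i split_n e _ [c e_bichromatic]; right.
have := card_sides c [set: 'I_n]; rewrite cardsT card_ord.
move=> /split_n [a [b [ap bq abj sp_ab]]].
have [SA SA_true cardSA] := exists_subset_card ap.
have [SB SB_false cardSB] := exists_subset_card bq.
have sideU b' : side c (SA :|: SB) b' = if b' then SA else SB.
  have cA := side_colour SA_true; have cB := side_colour SB_false.
  apply/setP => x; rewrite !inE.
  by case: b'; case xA: (x \in SA); case xB: (x \in SB) => //=;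
    by [move: (cA x xA); rewrite cB | rewrite cA | rewrite cB].
exists (SA :|: SB); apply/andP; split.
  by rewrite -(card_sides c) !sideU cardSA cardSB abj.
apply: max_deg_le_cross e_bichromatic _ _ _.
by apply/bip_sparse_sides; rewrite !sideU cardSA cardSB.
Qed.

Lemma not_ramsey_prop_BIP k i j n p :
  2 * k + 3 <= i -> p <= n ->
  (forall a b, a <= p -> b <= n - p -> a + b = j -> ~ bip_sparse k a b) ->
  ~ ramsey_prop_BIP k i j n.
Proof.
move=> large_i pn no_split ramsey_n.
have [P _ cardP] : exists2 P : {set 'I_n}, P \subset [set: 'I_n] & #|P| = p.
  by apply: exists_subset_card; rewrite cardsT card_ord.
pose c x := x \in P.
have [[S /andP [/eqP cardS]] | [S /andP [/eqP cardS sparse]]] :=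
  ramsey_n _ (complete_bipartite_simple c) (complete_bipartite_bipartite c).
  by apply/negP/(not_max_deg_le_compl (c := c)) => //; rewrite cardS.
have sideP b : side c S b \subset if b then P else ~: P.
  by case: b; apply/subsetP => x; rewrite !inE /c => /andP [_ /eqP ->].
apply: (no_split #|side c S true| #|side c S false|).
- by rewrite -cardP subset_leq_card ?sideP.
- have := cardsC P; rewrite card_ord cardP.
  by have := subset_leq_card (sideP false); lia.
- by rewrite card_sides.
- by apply/bip_sparse_sides/max_deg_le_complete_cross.
Qed.

Lemma bip_sparse_split k j p q :
  k < j -> p + q = (if j <= 2 * k then 2 * j - 1 - k else 2 * j - 1) ->
  exists a b, [/\ a <= p, b <= q, a + b = j & bip_sparse k a b].
Proof.
move=> kj pq.
have [jp | pj] := leqP j p; first by exists j, 0; split => //; lia.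
have [jq | qj] := leqP j q; first by exists 0, j; split => //; lia.
exists (minn k p), (j - minn k p); move: pq.
by case: (leqP j (2 * k)) => ? pq; split; rewrite /bip_sparse; lia.
Qed.

Lemma no_bip_sparse_split k j n a b :
  0 < j -> n < (if j <= 2 * k then 2 * j - 1 - k else 2 * j - 1) ->
  a <= minn j.-1 n -> b <= n - minn j.-1 n -> a + b = j -> ~ bip_sparse k a b.
Proof.
move=> j_gt0 + a_le b_le ab [sparse_a sparse_b].
by case: (leqP j (2 * k)) => ? n_lt; lia.
Qed.

Theorem theorem5p5 (k i j : nat) :
  2 <= k -> 2 * k + 3 <= i -> k + 2 <= j ->
  is_R_BIP k i j (if j <= 2 * k then 2 * j - 1 - k else 2 * j - 1).
Proof.
move=> _ large_i large_j; split.
  by apply: ramsey_prop_BIP_of_splits => // p q; apply: bip_sparse_split; lia.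
move=> n ramsey_n; rewrite leqNgt; apply/negP => small_n.
apply: (not_ramsey_prop_BIP large_i (geq_minr j.-1 n)) ramsey_n => a b.
by apply: no_bip_sparse_split; lia.
Qed.
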